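(* For any $\theta\in(0,1)$ there exist $\delta^*>0$ and a nonnegative $2\pi$-periodic function $W_\theta\in W^{1,\infty}$ with $W_\theta(x)=O(|x|^3)$ as $x\to0$ and $W_\theta(x)>0$ for $x\notin2\pi\mathbb Z$, such that the following holds. Let $x_0^*\in(-\delta^*,\delta^* )$, let $x^*(t)=2\arctan\big(e^{-t}\tan(x_0^*/2)\big)$, $\Omega^*(t)=[-\pi-x^*(t),\pi-x^*(t)]$, $\Omega^*_0=\Omega^*(0)$, and let $\varepsilon_0\in C^3(\Omega_0^* )$ with $\varepsilon_0(x)=O(|x|^3)$ as $x\to0$. Then the unique global solution $\varepsilon(t)=e^{tL}\varepsilon_0$ of $$\partial_t\varepsilon=L(\varepsilon)\ \text{ on }\Omega^*(t),\qquad \varepsilon(0)=\varepsilon_0\text{ on }\Omega^*_0,\qquad L(\varepsilon)=2\cos(x)\varepsilon-\sin(x)\partial_x\varepsilon+\sin(x)\int_0^x\varepsilon(t,\bar x)\,d\bar x,$$ satisfies for all $t\ge0$ $$\Big\|\frac{e^{tL}\varepsilon_0}{W_\theta}\Big\|_{L^\infty(\Omega^*(t))}\le e^{-(1-\theta)t}\Big\|\frac{\varepsilon_0}{W_\theta}\Big\|_{L^\infty(\Omega^*_0)}.$$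
   Context: $\Omega^*(t)$ is the image of $\Omega_0^*$ under the flow $\dot X=\sin X$, i.e. its endpoints $\pm\pi-x^*(t)$ solve this ODE. *)

From Stdlib Require Import Reals Lra.
From Coquelicot Require Import Coquelicot.
Open Scope R_scope.

Definition xstar (x0 t : R) : R := 2 * atan (exp (- t) * tan (x0 / 2)).

Definition in_Omega (x0 t x : R) : Prop :=
  - PI - xstar x0 t <= x <= PI - xstar x0 t.

Definition in_Omega_int (x0 t x : R) : Prop :=
  - PI - xstar x0 t < x < PI - xstar x0 t.

Definition in_2piZ (x : R) : Prop := exists k : Z, x = 2 * PI * IZR k.

Definition bigO_cube0 (f : R -> R) : Prop :=
  exists C eta : R, 0 < eta /\
    forall x, Rabs x < eta -> Rabs (f x) <= C * Rabs x ^ 3.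

(* W in W^{1,oo}(R) (continuous representative): bounded and Lipschitz *)
Definition W1inf (W : R -> R) : Prop :=
  (exists M, forall x, Rabs (W x) <= M) /\
  (exists K, forall x y, Rabs (W x - W y) <= K * Rabs (x - y)).

Definition C3_on (a b : R) (f : R -> R) : Prop :=
  exists g : R -> R,
    (forall k x, (k <= 3)%nat -> ex_derive_n g k x) /\
    (forall x, continuity_pt (Derive_n g 3) x) /\
    (forall x, a <= x <= b -> g x = f x).

(* The zero set of W on Omega*(t) is a null set (W>0 off 2piZ), and for the
   continuous functions considered the essential supremum equals the
   supremum over the points where W does not vanish. *)
Definition Linf_ratio (x0 t : R) (f W : R -> R) : Rbar :=
  Lub_Rbar (fun r => exists x, in_Omega x0 t x /\ W x <> 0 /\
                               r = Rabs (f x / W x)).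

Definition is_global_solution (x0 : R) (eps0 : R -> R) (eps : R -> R -> R) : Prop :=
  (forall x, in_Omega x0 0 x -> eps 0 x = eps0 x) /\
  (forall t x, 0 <= t -> in_Omega x0 t x ->
     forall e : R, 0 < e -> exists d : R, 0 < d /\
       forall s y, 0 <= s -> in_Omega x0 s y -> Rabs (s - t) < d -> Rabs (y - x) < d ->
         Rabs (eps s y - eps t x) < e) /\
  (forall t x, 0 < t -> in_Omega_int x0 t x ->
     ex_derive (fun s => eps s x) t /\
     ex_derive (fun y => eps t y) x /\
     continuous (fun p : R * R => Derive (fun s => eps s (snd p)) (fst p)) (t, x) /\
     continuous (fun p : R * R => Derive (fun y => eps (fst p) y) (snd p)) (t, x) /\
     Derive (fun s => eps s x) t =
       2 * cos x * eps t x - sin x * Derive (fun y => eps t y) x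
       + sin x * RInt (fun y => eps t y) 0 x).

From Stdlib Require Import Reals Lra Lia.
From Coquelicot Require Import Coquelicot.
Open Scope R_scope.

(* The weight is [W x = |sin (x / 2)|^3].  Along a characteristic [X' = sin X]
   the transport term of [L] cancels, leaving
   [d/dt eps (t, X t) = 2 cos X eps + sin X int_0^X eps]; the boundary curves
   [+-PI - x*(t)] are themselves characteristics, so characteristics through
   interior points stay in [Omega*(t)].  For [|x| <= PI + 1/10] the weight is a
   supersolution: [(2 cos x + 1 - theta) W - W' sin x + |sin x| |int_0^x W| <= 0],
   a polynomial inequality in [cos (x / 2)].  A comparison argument along
   characteristics therefore improves a bound
   [|eps| <= M e^(-(1 - theta) t) W + D e^(9 t)] on [[0, tau]], where the [D] term
   absorbs the nonlocal term, to the same bound with [5 D / 7].  Starting from a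
   crude [D] (continuity on a compact set) and iterating gives the bound with [D = 0],
   [M] being the initial weighted norm. *)

Lemma locally_R (x : R) (P : R -> Prop) :
  (exists d, 0 < d /\ forall y, Rabs (y - x) < d -> P y) -> locally x P.
Proof. intros [d [Hd H]]. exists (mkposreal d Hd). exact H. Qed.

Lemma continuous_eps_delta (f : R -> R) x : continuous f x ->
  forall e, 0 < e -> exists d, 0 < d /\ forall y, Rabs (y - x) < d -> Rabs (f y - f x) < e.
Proof.
  intros H e He. apply continuity_pt_filterlim in H.
  destruct (proj1 (continuity_pt_locally f x) H (mkposreal e He)) as [d Hd].
  exists d. split; [apply cond_pos | exact Hd].
Qed.

Lemma eps_delta_continuous (f : R -> R) x :
  (forall e, 0 < e -> exists d, 0 < d /\ forall y, Rabs (y - x) < d -> Rabs (f y - f x) < e) ->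
  continuous f x.
Proof.
  intros H. apply continuity_pt_filterlim, continuity_pt_locally. intros e.
  destruct (H e (cond_pos e)) as [d [Hd H2]]. exists (mkposreal d Hd). exact H2.
Qed.

Lemma ex_derive_continuous_R (f : R -> R) x : ex_derive f x -> continuous f x.
Proof. apply (ex_derive_continuous (K := R_AbsRing) (V := R_NormedModule)). Qed.

Lemma Rabs_sin_sub_le a b : Rabs (sin a - sin b) <= Rabs (a - b).
Proof.
  destruct (MVT_abs sin cos b a) as [c [-> _]].
  { intros c _. apply derivable_pt_lim_sin. }
  rewrite <- (Rmult_1_l (Rabs (a - b))) at 2.
  apply Rmult_le_compat_r; [apply Rabs_pos | apply Rabs_le, COS_bound].
Qed.

Lemma Rabs_cos_sub_le a b : Rabs (cos a - cos b) <= Rabs (a - b).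
Proof.
  destruct (MVT_abs cos (fun x => - sin x) b a) as [c [-> _]].
  { intros c _. apply derivable_pt_lim_cos. }
  rewrite <- (Rmult_1_l (Rabs (a - b))) at 2. rewrite Rabs_Ropp.
  apply Rmult_le_compat_r; [apply Rabs_pos | apply Rabs_le, SIN_bound].
Qed.

Lemma exp_le_exp x y : x <= y -> exp x <= exp y.
Proof. intros [H| ->]; [left; apply exp_increasing, H | apply Rle_refl]. Qed.

Lemma Rabs_sub_le_of_between a b z : Rmin a b <= z <= Rmax a b -> Rabs (z - a) <= Rabs (b - a).
Proof. unfold Rmin, Rmax. destruct Rle_dec; intros; split_Rabs; lra. Qed.

Lemma le_of_le_in_interior (f G : R -> R) a b y : a < b -> a <= y <= b ->
  (forall e, 0 < e -> exists d, 0 < d /\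
     forall y', a <= y' <= b -> Rabs (y' - y) < d -> Rabs (f y' - f y) < e) ->
  continuous G y -> (forall y', a < y' < b -> f y' <= G y') -> f y <= G y.
Proof.
  intros Hab Hy Hf HG Hint. apply Rle_plus_epsilon. intros e He.
  destruct (Hf (e / 2) ltac:(lra)) as [d1 [Hd1 Hf1]].
  destruct (continuous_eps_delta G y HG (e / 2) ltac:(lra)) as [d2 [Hd2 HG2]].
  set (r := Rmin (Rmin d1 d2) (b - a) / 2).
  assert (Hr : 0 < r /\ r < d1 /\ r < d2 /\ r < b - a).
  { unfold r. pose proof (Rmin_l (Rmin d1 d2) (b - a)). pose proof (Rmin_r (Rmin d1 d2) (b - a)).
    pose proof (Rmin_l d1 d2). pose proof (Rmin_r d1 d2).
    assert (0 < Rmin (Rmin d1 d2) (b - a)) by (repeat apply Rmin_pos; lra). lra. }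
  assert (Hy' : exists y', a < y' < b /\ Rabs (y' - y) <= r).
  { destruct (Rtotal_order y a) as [|[->|Ha]]; [lra| |].
    - exists (a + r). split; [lra|]. rewrite Rabs_right; lra.
    - destruct (Rtotal_order y b) as [Hb|[->|]]; [| |lra].
      + exists y. split; [lra|]. rewrite Rminus_diag_eq, Rabs_R0; lra.
      + exists (b - r). split; [lra|]. rewrite Rabs_left; lra. }
  destruct Hy' as [y' [Hy'1 Hy'2]].
  specialize (Hf1 y' ltac:(lra) ltac:(lra)). specialize (HG2 y' ltac:(lra)).
  specialize (Hint y' Hy'1). apply Rabs_lt_between in Hf1. apply Rabs_lt_between in HG2. lra.
Qed.

Lemma le_of_le_add_pow (q a b c : R) : 0 <= q < 1 -> 0 <= c ->
  (forall n, a <= b + q ^ n * c) -> a <= b.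
Proof.
  intros Hq Hc H. apply Rle_plus_epsilon. intros e He.
  destruct (pow_lt_1_zero q ltac:(rewrite Rabs_right; lra) (e / (c + 1))) as [N HN].
  { apply Rdiv_lt_0_compat; lra. }
  specialize (HN N (le_n N)). rewrite Rabs_right in HN by (apply Rle_ge, pow_le; lra).
  specialize (H N).
  assert (q ^ N * c <= e / (c + 1) * c) by (apply Rmult_le_compat_r; lra).
  assert (e / (c + 1) * c <= e).
  { apply (Rmult_le_reg_r (c + 1)); [lra|]. unfold Rdiv.
    replace (e * / (c + 1) * c * (c + 1)) with (e * c * ((c + 1) * / (c + 1))) by ring.
    rewrite Rinv_r by lra. nra. }
  lra.
Qed.

Lemma Rabs_RInt_le (f B : R -> R) a b IB : a <= b -> ex_RInt f a b -> is_RInt B a b IB ->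
  (forall y, a < y < b -> Rabs (f y) <= B y) -> Rabs (RInt f a b) <= IB.
Proof.
  intros Hab Hf HB Hle.
  assert (HB' : is_RInt (fun y => - B y) a b (- IB)) by exact (is_RInt_opp _ a b _ HB).
  assert (H1 : RInt f a b <= RInt B a b).
  { apply RInt_le; auto; [exists IB; auto|].
    intros y Hy. specialize (Hle y Hy). apply Rabs_le_between in Hle. lra. }
  assert (H2 : RInt (fun y => - B y) a b <= RInt f a b).
  { apply RInt_le; auto; [exists (- IB); auto|].
    intros y Hy. specialize (Hle y Hy). apply Rabs_le_between in Hle. lra. }
  rewrite (is_RInt_unique _ _ _ _ HB) in H1. rewrite (is_RInt_unique _ _ _ _ HB') in H2.
  apply Rabs_le_between. lra.
Qed.

(** * The weight *)

Definition W (x : R) : R := Rabs (sin (x / 2)) ^ 3.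
Definition dW (x : R) : R := 3 / 2 * sin (x / 2) * Rabs (sin (x / 2)) * cos (x / 2).
(* [V x = |int_0^x W|] for [|x| <= 2 PI]. *)
Definition V (x : R) : R := 2 / 3 * (1 - cos (x / 2)) ^ 2 * (2 + cos (x / 2)).

Lemma W_ge_0 x : 0 <= W x.
Proof. apply pow_le, Rabs_pos. Qed.

Lemma W_le_1 x : W x <= 1.
Proof.
  unfold W. pose proof (Rabs_pos (sin (x / 2))).
  assert (Rabs (sin (x / 2)) <= 1) by (apply Rabs_le, SIN_bound). nra.
Qed.

Lemma W_periodic x : W (x + 2 * PI) = W x.
Proof.
  unfold W. replace ((x + 2 * PI) / 2) with (x / 2 + PI) by field.
  now rewrite neg_sin, Rabs_Ropp.
Qed.

Lemma Rabs_cube_sub_le a b : 0 <= a <= 1 -> 0 <= b <= 1 ->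
  Rabs (a ^ 3 - b ^ 3) <= 3 * Rabs (a - b).
Proof.
  intros Ha Hb. replace (a ^ 3 - b ^ 3) with ((a - b) * (a * a + a * b + b * b)) by ring.
  rewrite Rabs_mult, (Rabs_right (a * a + a * b + b * b)) by nra.
  rewrite (Rmult_comm 3). apply Rmult_le_compat_l; [apply Rabs_pos | nra].
Qed.

Lemma W_lipschitz x y : Rabs (W x - W y) <= 3 / 2 * Rabs (x - y).
Proof.
  unfold W. eapply Rle_trans.
  { apply Rabs_cube_sub_le; split; try apply Rabs_pos; apply Rabs_le, SIN_bound. }
  eapply Rle_trans. { apply Rmult_le_compat_l; [lra | apply Rabs_triang_inv2]. }
  eapply Rle_trans. { apply Rmult_le_compat_l; [lra | apply Rabs_sin_sub_le]. }
  replace (x / 2 - y / 2) with ((x - y) * / 2) by field.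
  rewrite Rabs_mult, (Rabs_right (/ 2)) by lra. lra.
Qed.

Lemma W_W1inf : W1inf W.
Proof.
  split.
  - exists 1. intros x. rewrite Rabs_right by (apply Rle_ge, W_ge_0). apply W_le_1.
  - exists (3 / 2). apply W_lipschitz.
Qed.

Lemma W_bigO_cube0 : bigO_cube0 W.
Proof.
  exists (1 / 8), 1. split; [lra|]. intros x _.
  rewrite Rabs_right by (apply Rle_ge, W_ge_0). unfold W.
  pose proof (Rabs_sin_sub_le (x / 2) 0) as H. rewrite sin_0, !Rminus_0_r in H.
  rewrite Rabs_div, (Rabs_right 2) in H by lra.
  replace (1 / 8 * Rabs x ^ 3) with ((Rabs x / 2) ^ 3) by field.
  apply pow_incr. split; [apply Rabs_pos | exact H].
Qed.

Lemma W_eq_0 x : W x = 0 -> in_2piZ x.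
Proof.
  unfold W. intros H. destruct (Req_dec (sin (x / 2)) 0) as [Hs|Hs].
  - destruct (sin_eq_0_0 _ Hs) as [k Hk]. exists k. lra.
  - apply Rabs_no_R0, (pow_nonzero _ 3) in Hs. contradiction.
Qed.

Lemma W_pos x : ~ in_2piZ x -> 0 < W x.
Proof.
  intros H. destruct (W_ge_0 x) as [Hp|Hz]; [exact Hp|].
  destruct H. now apply W_eq_0.
Qed.

Lemma is_derive_Rabs_cube (u : R) : is_derive (fun v => Rabs v ^ 3) u (3 * u * Rabs u).
Proof.
  destruct (Rtotal_order u 0) as [Hu|[->|Hu]].
  - apply is_derive_ext_loc with (fun v => - v ^ 3).
    + apply locally_R. exists (- u). split; [lra|]. intros y Hy; cbv beta.
      apply Rabs_lt_between in Hy. rewrite Rabs_left by lra. simpl; ring.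
    + rewrite (Rabs_left u) by lra. auto_derive; [auto | ring].
  - rewrite Rmult_0_r, Rmult_0_l. apply is_derive_Reals.
    intros e He. exists (mkposreal (Rmin 1 e) (Rmin_pos _ _ Rlt_0_1 He)).
    intros h Hh Hh2. simpl in Hh2. rewrite Rplus_0_l, Rabs_R0.
    replace ((Rabs h ^ 3 - 0 ^ 3) / h - 0) with (Rabs h * Rabs h * (Rabs h / h)) by (field; auto).
    rewrite !Rabs_mult, Rabs_div, Rabs_Rabsolu by auto.
    unfold Rdiv. rewrite Rinv_r by (apply Rabs_no_R0; auto).
    pose proof (Rmin_l 1 e). pose proof (Rmin_r 1 e). pose proof (Rabs_pos h). nra.
  - apply is_derive_ext_loc with (fun v => v ^ 3).
    + apply locally_R. exists u. split; [lra|]. intros y Hy; cbv beta.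
      apply Rabs_lt_between in Hy. rewrite Rabs_right by lra. simpl; ring.
    + rewrite (Rabs_right u) by lra. auto_derive; [auto | ring].
Qed.

Lemma is_derive_W (x : R) : is_derive W x (dW x).
Proof.
  assert (H : is_derive (fun x => sin (x / 2)) x (cos (x / 2) * / 2))
    by (auto_derive; [auto | unfold Rdiv; ring]).
  pose proof (is_derive_comp _ _ x _ _ (is_derive_Rabs_cube (sin (x / 2))) H) as Hc.
  replace (dW x) with (scal (cos (x / 2) * / 2) (3 * sin (x / 2) * Rabs (sin (x / 2)))).
  - exact Hc.
  - unfold dW, scal; simpl; unfold mult; simpl. field.
Qed.

Lemma continuous_W (x : R) : continuous W x.
Proof. apply ex_derive_continuous_R. exists (dW x). apply is_derive_W. Qed.

Lemma is_derive_V (y : R) : is_derive V y (sin (y / 2) ^ 3).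
Proof.
  unfold V. auto_derive; [auto|]. unfold Rdiv.
  pose proof (sin2_cos2 (y * / 2)) as H. unfold Rsqr in H.
  replace (sin (y * / 2) ^ 3) with (sin (y * / 2) * (1 - cos (y * / 2) ^ 2))
    by (replace (1 - cos (y * / 2) ^ 2) with (sin (y * / 2) ^ 2) by lra; ring).
  simpl; field.
Qed.

Lemma V_0 : V 0 = 0.
Proof. unfold V. replace (0 / 2) with 0 by field. rewrite cos_0. ring. Qed.

Lemma is_RInt_W_pos (x : R) : 0 <= x <= 2 * PI -> is_RInt W 0 x (V x).
Proof.
  intros Hx. replace (V x) with (minus (V x) (V 0))
    by (rewrite V_0; unfold minus, plus, opp; simpl; ring).
  apply (is_RInt_derive (V := R_CompleteNormedModule)).
  - intros y Hy. rewrite Rmin_left, Rmax_right in Hy by lra.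
    replace (W y) with (sin (y / 2) ^ 3); [apply is_derive_V|].
    unfold W. rewrite Rabs_right; [reflexivity | apply Rle_ge, sin_ge_0; lra].
  - intros y _. apply continuous_W.
Qed.

Lemma is_RInt_W_neg (x : R) : - 2 * PI <= x <= 0 -> is_RInt W x 0 (V x).
Proof.
  intros Hx. replace (V x) with (minus (- V 0) (- V x))
    by (rewrite V_0; unfold minus, plus, opp; simpl; ring).
  apply (is_RInt_derive (V := R_CompleteNormedModule) (fun y => - V y)).
  - intros y Hy. rewrite Rmin_left, Rmax_right in Hy by lra.
    replace (W y) with (- sin (y / 2) ^ 3).
    + apply is_derive_Reals, (derivable_pt_lim_opp V), is_derive_Reals, is_derive_V.
    + assert (0 <= sin (- y / 2)) by (apply sin_ge_0; lra).
      replace (- y / 2) with (- (y / 2)) in H by field. rewrite sin_neg in H.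
      unfold W. rewrite Rabs_left1 by lra. ring.
  - intros y _. apply continuous_W.
Qed.

Lemma is_RInt_affine_W (a b K L IW : R) : is_RInt W a b IW ->
  is_RInt (fun y => K * W y + L) a b (K * IW + L * (b - a)).
Proof.
  intros H.
  pose proof (is_RInt_plus _ _ a b _ _ (is_RInt_scal _ a b K _ H) (is_RInt_const a b L)) as H2.
  replace (K * IW + L * (b - a)) with (plus (scal K IW) (scal (b - a) L)); [exact H2|].
  unfold plus, scal; simpl. unfold mult; simpl. ring.
Qed.

Lemma Rabs_RInt_le_W (f : R -> R) (K L X : R) : Rabs X <= 2 * PI -> ex_RInt f 0 X ->
  (forall y, Rmin 0 X < y < Rmax 0 X -> Rabs (f y) <= K * W y + L) ->
  Rabs (RInt f 0 X) <= K * V X + L * Rabs X.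
Proof.
  intros HX Hf Hle. apply Rabs_le_between in HX.
  destruct (Rle_or_lt 0 X) as [HX0|HX0].
  - rewrite Rmin_left, Rmax_right in Hle by lra.
    rewrite (Rabs_right X) by lra. replace (L * X) with (L * (X - 0)) by ring.
    apply (Rabs_RInt_le _ (fun y => K * W y + L)); auto.
    apply is_RInt_affine_W, is_RInt_W_pos. lra.
  - rewrite Rmin_right, Rmax_left in Hle by lra.
    rewrite <- (opp_RInt_swap _ _ _ (ex_RInt_swap _ _ _ Hf)).
    unfold opp; simpl. rewrite Rabs_Ropp, (Rabs_left X) by lra.
    replace (- X) with (0 - X) by ring.
    apply (Rabs_RInt_le _ (fun y => K * W y + L)); auto.
    + lra.
    + apply ex_RInt_swap, Hf.
    + apply is_RInt_affine_W, is_RInt_W_neg. lra.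
Qed.

Lemma cos_half_ge (x : R) : Rabs x <= PI + / 10 -> - / 20 <= cos (x / 2).
Proof.
  intros Hx. apply Rabs_le_between in Hx.
  destruct (Rle_or_lt (- (PI / 2)) (x / 2)) as [H1|H1].
  - destruct (Rle_or_lt (x / 2) (PI / 2)) as [H2|H2].
    + pose proof (cos_ge_0 (x / 2) H1 H2). lra.
    + pose proof (Rabs_cos_sub_le (x / 2) (PI / 2)) as H. rewrite cos_PI2 in H.
      rewrite (Rabs_right (x / 2 - PI / 2)) in H by lra. apply Rabs_le_between in H. lra.
  - pose proof (Rabs_cos_sub_le (x / 2) (- (PI / 2))) as H. rewrite cos_neg, cos_PI2 in H.
    rewrite (Rabs_left (x / 2 - - (PI / 2))) in H by lra. apply Rabs_le_between in H. lra.
Qed.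

Lemma weight_polynomial_ineq (C th A : R) :
  0 < th < 1 -> - / 20 <= C <= 1 -> A * A = 1 - C * C ->
  (C * C - 1 - th) * (A * A) + 4 / 3 * Rabs C * ((1 - C) * (1 - C)) * (2 + C) <= 0.
Proof.
  intros Hth HC ->. assert (0 <= th * (1 - C * C)) by (apply Rmult_le_pos; nra).
  destruct (Rle_or_lt 0 C) as [H0|H0].
  - rewrite Rabs_right by lra.
    assert (0 <= (1 - C) * (1 - C) * (1 - C) * (1 + C / 3))
      by (repeat apply Rmult_le_pos; lra).
    replace ((C * C - 1 - th) * (1 - C * C) + 4 / 3 * C * ((1 - C) * (1 - C)) * (2 + C))
      with (- ((1 - C) * (1 - C) * (1 - C) * (1 + C / 3)) - th * (1 - C * C)) by field.
    lra.
  - rewrite Rabs_left by lra.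
    assert (- C * ((1 - C) * (1 - C)) <= / 20 * 3) by nra.
    assert (0 <= - C * ((1 - C) * (1 - C))) by nra.
    nra.
Qed.

(* In terms of [C = cos (x / 2)] and [A = |sin (x / 2)|] the left-hand side is
   [A] times the polynomial of [weight_polynomial_ineq]. *)
Lemma W_supersolution (th x : R) : 0 < th < 1 -> Rabs x <= PI + / 10 ->
  (2 * cos x + (1 - th)) * W x - dW x * sin x + Rabs (sin x) * V x <= 0.
Proof.
  intros Hth Hx. pose proof (cos_half_ge x Hx) as HC.
  assert (Hs : sin x = 2 * sin (x / 2) * cos (x / 2)) by (rewrite <- sin_2a; f_equal; field).
  assert (Hc : cos x = 2 * cos (x / 2) * cos (x / 2) - 1)
    by (rewrite <- cos_2a_cos; f_equal; field).
  rewrite Hs, Hc. unfold W, dW, V.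
  pose proof (sin2_cos2 (x / 2)) as HSC. unfold Rsqr in HSC.
  pose proof (COS_bound (x / 2)) as HC2.
  set (S := sin (x / 2)) in *. set (C := cos (x / 2)) in *. clearbody S C.
  set (A := Rabs S).
  assert (HA : 0 <= A) by apply Rabs_pos.
  assert (HSS : S * S = A * A) by (unfold A; rewrite <- Rabs_mult, Rabs_right; nra).
  replace (Rabs (2 * S * C)) with (2 * A * Rabs C)
    by (rewrite !Rabs_mult, (Rabs_right 2) by lra; reflexivity).
  pose proof (weight_polynomial_ineq C th A Hth ltac:(lra) ltac:(lra)) as HP.
  match goal with |- ?L <= 0 =>
    replace L with (A * ((C * C - 1 - th) * (A * A)
                         + 4 / 3 * Rabs C * ((1 - C) * (1 - C)) * (2 + C))
                    + 3 * C * C * A * (A * A - S * S)) by (unfold A; field) end.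
  replace (A * A - S * S) with 0 by lra. rewrite Rmult_0_r, Rplus_0_r, <- (Rmult_0_r A).
  apply Rmult_le_compat_l; assumption.
Qed.

Lemma W_PI2_neq_0 : W (PI / 2) <> 0.
Proof.
  intros H. apply W_eq_0 in H as [k Hk]. pose proof PI2_3_2.
  assert (0 < IZR k < 1) as [H1 H2].
  { split; apply Rnot_le_lt; intros Hk'; [assert (2 * PI * IZR k <= 0) by nra
                                         | assert (2 * PI <= 2 * PI * IZR k) by nra]; lra. }
  apply lt_IZR in H1. apply lt_IZR in H2. lia.
Qed.

(** * A comparison principle *)

Section Comparison.

Variables (g g' : R -> R) (T L : R).
Hypothesis T_pos : 0 < T.
Hypothesis L_ge_0 : 0 <= L.
Hypothesis g_right_continuous_0 : forall e, 0 < e -> exists d, 0 < d /\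
  forall s, 0 <= s -> s < d -> s <= T -> Rabs (g s - g 0) < e.
Hypothesis is_derive_g : forall s, 0 < s <= T -> is_derive g s (g' s).
Hypothesis g'_le : forall s, 0 < s <= T -> 0 < g s -> g' s <= L * g s.

Lemma g_right_continuous s0 : 0 <= s0 <= T -> forall e, 0 < e -> exists d, 0 < d /\
  forall s, s0 <= s -> s < s0 + d -> s <= T -> Rabs (g s - g s0) < e.
Proof.
  intros Hs0 e He. destruct (Rle_lt_or_eq_dec 0 s0 (proj1 Hs0)) as [Hp|<-].
  - assert (Hc : continuous g s0)
      by (apply ex_derive_continuous_R; exists (g' s0); apply is_derive_g; lra).
    destruct (continuous_eps_delta g s0 Hc e He) as [d [Hd Hd2]].
    exists d. split; [lra|]. intros s H1 H2 H3. apply Hd2, Rabs_lt_between. lra.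
  - destruct (g_right_continuous_0 e He) as [d [Hd Hd2]].
    exists d. split; [lra|]. intros s H1 H2 H3. apply Hd2; lra.
Qed.

Lemma last_nonpos_point : g 0 <= 0 -> 0 < g T ->
  exists s0, 0 <= s0 < T /\ g s0 <= 0 /\ forall s, s0 < s <= T -> 0 < g s.
Proof.
  intros Hg0 HgT. set (E := fun s => 0 <= s <= T /\ g s <= 0).
  destruct (completeness E) as [s0 [Hub Hlub]].
  { exists T. intros x [Hx _]. lra. }
  { exists 0. split; [lra | exact Hg0]. }
  assert (Hs0 : 0 <= s0 <= T).
  { split; [apply Hub; split; [lra | exact Hg0]|]. apply Hlub. intros x [Hx _]. lra. }
  assert (Hgs0 : g s0 <= 0).
  { destruct (Rle_or_lt (g s0) 0) as [H|H]; [exact H|exfalso].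
    destruct (Rle_lt_or_eq_dec 0 s0 (proj1 Hs0)) as [Hp|<-]; [|lra].
    assert (Hc : continuous g s0)
      by (apply ex_derive_continuous_R; exists (g' s0); apply is_derive_g; lra).
    destruct (continuous_eps_delta g s0 Hc (g s0) H) as [d [Hdp Hd2]].
    assert (s0 <= s0 - d); [|lra].
    apply Hlub. intros x [Hx1 Hx2]. destruct (Rle_or_lt x (s0 - d)) as [H3|H3]; [exact H3|].
    assert (x <= s0) by (apply Hub; split; assumption).
    specialize (Hd2 x ltac:(apply Rabs_lt_between; lra)). apply Rabs_lt_between in Hd2. lra. }
  exists s0. split; [|split; [exact Hgs0|]].
  - split; [lra|]. destruct (Rle_lt_or_eq_dec s0 T (proj2 Hs0)) as [| ->]; lra.
  - intros s Hs. destruct (Rle_or_lt (g s) 0) as [H|H]; [|exact H].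
    assert (s <= s0) by (apply Hub; split; lra). lra.
Qed.

Lemma exp_scaled_nonincreasing a b : 0 < a < b -> b <= T ->
  (forall s, a <= s <= b -> 0 < g s) -> g b * exp (- L * b) <= g a * exp (- L * a).
Proof.
  intros Hab HbT Hpos.
  destruct (MVT_cor2 (fun s => g s * exp (- L * s))
              (fun s => (g' s - L * g s) * exp (- L * s)) a b) as [c [Hc1 Hc2]]; [lra| |].
  - intros c Hc.
    replace ((g' c - L * g c) * exp (- L * c))
      with (g' c * exp (- L * c) + g c * (- L * exp (- L * c))) by ring.
    apply (derivable_pt_lim_mult g (fun s => exp (- L * s))).
    + apply is_derive_Reals, is_derive_g. lra.
    + apply is_derive_Reals. auto_derive; [auto | ring].
  - assert (g' c <= L * g c) by (apply g'_le; [lra | apply Hpos; lra]).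
    assert (0 < exp (- L * c)) by apply exp_pos.
    assert ((g' c - L * g c) * exp (- L * c) * (b - a) <= 0); [|lra].
    apply Rmult_le_0_r; [|lra]. apply Rmult_le_0_r; lra.
Qed.

Lemma nonpos_of_differential_ineq : g 0 <= 0 -> g T <= 0.
Proof.
  intros Hg0. destruct (Rle_or_lt (g T) 0) as [H|HgT]; [exact H|exfalso].
  destruct (last_nonpos_point Hg0 HgT) as [s0 [Hs0 [Hgs0 Hpos]]].
  set (hT := g T * exp (- L * T)).
  assert (HhT : 0 < hT) by (apply Rmult_lt_0_compat; [lra | apply exp_pos]).
  destruct (g_right_continuous s0 ltac:(lra) hT HhT) as [d [Hdp Hd2]].
  set (s := s0 + Rmin d (T - s0) / 2).
  assert (Hs : s0 < s < s0 + d /\ s < T).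
  { unfold s. pose proof (Rmin_l d (T - s0)). pose proof (Rmin_r d (T - s0)).
    assert (0 < Rmin d (T - s0)) by (apply Rmin_pos; lra). lra. }
  assert (Hgs : g s < hT).
  { specialize (Hd2 s ltac:(lra) ltac:(lra) ltac:(lra)). apply Rabs_lt_between in Hd2. lra. }
  assert (Hes : exp (- L * s) <= 1).
  { rewrite <- exp_0. apply exp_le_exp. nra. }
  pose proof (exp_scaled_nonincreasing s T ltac:(lra) (Rle_refl T)
                (fun u Hu => Hpos u ltac:(lra))) as Hdec.
  assert (0 < g s) by (apply Hpos; lra).
  assert (0 < exp (- L * s)) by apply exp_pos.
  fold hT in Hdec. nra.
Qed.

End Comparison.

(** * Differentiation along a curve *)

Lemma is_derive_increment_along_curve (f : R -> R -> R) (X : R -> R) (s d : R) :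
  0 < d ->
  (forall u v, Rabs (u - s) < d -> Rabs (v - X s) < d -> ex_derive (fun z => f z v) u) ->
  continuity_2d_pt (fun u v => Derive (fun z => f z v) u) s (X s) ->
  continuous X s ->
  is_derive (fun r => f r (X r) - f s (X r)) s (Derive (fun z => f z (X s)) s).
Proof.
  intros Hd Hex Hcont HXc. apply is_derive_Reals.
  intros e He. destruct (Hcont (mkposreal e He)) as [d1 Hd1].
  assert (Hm : 0 < Rmin d1 d) by (apply Rmin_pos; [apply cond_pos | lra]).
  destruct (continuous_eps_delta X s HXc _ Hm) as [d2 [Hd2 HXd2]].
  assert (Hdel : 0 < Rmin (Rmin d1 d) d2) by (apply Rmin_pos; lra).
  exists (mkposreal _ Hdel). intros h Hh0 Hh. simpl in Hh.
  pose proof (Rmin_l (Rmin d1 d) d2). pose proof (Rmin_r (Rmin d1 d) d2).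
  pose proof (Rmin_l d1 d). pose proof (Rmin_r d1 d).
  set (v := X (s + h)).
  assert (Hv : Rabs (v - X s) < Rmin d1 d)
    by (apply HXd2; replace (s + h - s) with h by ring; lra).
  assert (Hseg : forall z, Rmin s (s + h) <= z <= Rmax s (s + h) -> Rabs (z - s) < Rmin d1 d).
  { intros z Hz. apply Rabs_sub_le_of_between in Hz.
    replace (s + h - s) with h in Hz by ring. lra. }
  destruct (MVT_gen (fun z => f z v) s (s + h) (fun z => Derive (fun w => f w v) z))
    as [c [Hc Hc2]].
  { intros z Hz. apply Derive_correct, (Hex z v); [|lra].
    assert (Rabs (z - s) < Rmin d1 d) by (apply Hseg; lra). lra. }
  { intros z Hz.
    apply continuity_pt_filterlim, (ex_derive_continuous_R (fun w => f w v)), (Hex z v); [|lra].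
    assert (Rabs (z - s) < Rmin d1 d) by (apply Hseg; lra). lra. }
  replace ((f (s + h) v - f s v - (f s (X s) - f s (X s))) / h
           - Derive (fun z => f z (X s)) s)
    with (Derive (fun w => f w v) c - Derive (fun z => f z (X s)) s)
    by (simpl in Hc2; rewrite Hc2; replace (s + h - s) with h by ring; field; exact Hh0).
  apply Hd1; [|lra]. specialize (Hseg c Hc). lra.
Qed.

Lemma is_derive_along_curve (f : R -> R -> R) (X : R -> R) (s dX d : R) :
  0 < d ->
  (forall u v, Rabs (u - s) < d -> Rabs (v - X s) < d -> ex_derive (fun z => f z v) u) ->
  ex_derive (fun y => f s y) (X s) ->
  continuity_2d_pt (fun u v => Derive (fun z => f z v) u) s (X s) ->
  is_derive X s dX ->
  is_derive (fun r => f r (X r)) s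
    (Derive (fun z => f z (X s)) s + Derive (fun y => f s y) (X s) * dX).
Proof.
  intros Hd Hex Hexy Hcont HX.
  assert (HXc : continuous X s) by (apply ex_derive_continuous_R; exists dX; exact HX).
  apply (is_derive_ext (fun r => (f r (X r) - f s (X r)) + f s (X r))); [intros r; simpl; ring|].
  apply (is_derive_plus (K := R_AbsRing) (V := R_NormedModule)).
  - exact (is_derive_increment_along_curve f X s d Hd Hex Hcont HXc).
  - rewrite Rmult_comm. apply (is_derive_comp (fun y => f s y) X); [|exact HX].
    apply Derive_correct, Hexy.
Qed.

(** * Characteristics *)

Lemma atan_lt_iff u w : atan u < atan w <-> u < w.
Proof.
  split; [|apply atan_increasing]. intros H.
  destruct (Rlt_or_le u w) as [|[Hlt| ->]]; [assumption | | lra].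
  apply atan_increasing in Hlt. lra.
Qed.

Lemma atan_pos_iff u : 0 < atan u <-> 0 < u.
Proof. rewrite <- atan_0 at 1. apply atan_lt_iff. Qed.

Lemma atan_add_lt_PI2_iff u v : atan u + atan v < PI / 2 <-> v <= 0 \/ u * v < 1.
Proof.
  pose proof (atan_bound u). destruct (Rle_or_lt v 0) as [Hv|Hv].
  - assert (atan v <= 0) by (apply Rnot_lt_le; rewrite atan_pos_iff; lra).
    split; intros; [left | ]; lra.
  - pose proof (atan_inv v Hv). split.
    + intros H1. right. assert (Hu : u < / v) by (apply atan_lt_iff; lra).
      apply (Rmult_lt_compat_r v) in Hu; [|lra]. rewrite Rinv_l in Hu; lra.
    + intros [|H1]; [lra|]. assert (Hu : u < / v).
      { apply (Rmult_lt_reg_r v); [lra|]. rewrite Rinv_l; lra. }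
      apply atan_lt_iff in Hu. lra.
Qed.

Lemma PI2_lt_atan_add_iff u v : PI / 2 < atan u + atan v <-> 0 < v /\ 1 < u * v.
Proof.
  pose proof (atan_bound u). destruct (Rle_or_lt v 0) as [Hv|Hv].
  - assert (atan v <= 0) by (apply Rnot_lt_le; rewrite atan_pos_iff; lra).
    split; intros; lra.
  - pose proof (atan_inv v Hv). split.
    + intros H1. split; [exact Hv|]. assert (Hu : / v < u) by (apply atan_lt_iff; lra).
      apply (Rmult_lt_compat_r v) in Hu; [|lra]. rewrite Rinv_l in Hu; lra.
    + intros [_ H1]. assert (Hu : / v < u).
      { apply (Rmult_lt_reg_r v); [lra|]. rewrite Rinv_l; lra. }
      apply atan_lt_iff in Hu. lra.
Qed.

Lemma exp_mul_pos_iff s a : 0 < exp s * a <-> 0 < a.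
Proof.
  pose proof (exp_pos s). split; intros H0; [|nra].
  apply Rnot_le_lt. intros Ha. assert (exp s * a <= 0) by nra. lra.
Qed.

Lemma exp_mul_exp_opp s k a : exp s * k * (exp (- s) * a) = k * a.
Proof. rewrite exp_Ropp. field. apply Rgt_not_eq, exp_pos. Qed.

Lemma sin_2atan u : sin (2 * atan u) = 2 * u / (1 + u * u).
Proof.
  rewrite sin_2a, sin_atan, cos_atan.
  assert (H : 0 < 1 + u²) by (unfold Rsqr; nra).
  pose proof (sqrt_lt_R0 _ H). pose proof (sqrt_sqrt _ (Rlt_le _ _ H)) as Hss.
  unfold Rsqr in *.
  replace (2 * (u / sqrt (1 + u * u)) * (1 / sqrt (1 + u * u)))
    with (2 * u / (sqrt (1 + u * u) * sqrt (1 + u * u))) by (field; lra).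
  now rewrite Hss.
Qed.

Lemma is_derive_2atan_exp (k beta : R) : (forall w, sin (w + beta) = sin w) ->
  forall s, is_derive (fun s => 2 * atan (exp s * k) + beta) s
                      (sin (2 * atan (exp s * k) + beta)).
Proof.
  intros Hb s. rewrite Hb, sin_2atan. auto_derive; [auto|].
  field. assert (0 <= exp s * k * (exp s * k)) by nra. lra.
Qed.

Lemma xstar_opp x0 s : xstar (- x0) s = - xstar x0 s.
Proof.
  unfold xstar. replace (- x0 / 2) with (- (x0 / 2)) by field.
  rewrite tan_neg, Ropp_mult_distr_r_reverse, atan_opp. ring.
Qed.

Lemma Rabs_xstar_lt_PI x0 s : Rabs (xstar x0 s) < PI.
Proof.
  unfold xstar. pose proof (atan_bound (exp (- s) * tan (x0 / 2))).
  apply Rabs_def1; lra.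
Qed.

Lemma in_Omega_int_opp x0 s y : in_Omega_int (- x0) s (- y) <-> in_Omega_int x0 s y.
Proof. unfold in_Omega_int. rewrite xstar_opp. lra. Qed.

Lemma exp_mul_le_0_iff s a : exp s * a <= 0 <-> a <= 0.
Proof.
  pose proof (exp_mul_pos_iff s a).
  split; intros H0; apply Rnot_lt_le; intros Hc; apply H in Hc || apply H0 in Hc; lra.
Qed.

Lemma exp_mul_exp_opp_l s t : exp s * (exp (- s) * t) = t.
Proof. rewrite <- Rmult_assoc, <- exp_plus, Rplus_opp_r, exp_0. ring. Qed.

(* The conditions on the right do not depend on [s]: along [u = e^s k] and
   [v = e^(-s) tan (x0 / 2)] the product [u v] and the sign of [v] are constant. *)
Lemma in_Omega_int_2atan_exp x0 s k :
  in_Omega_int x0 s (2 * atan (exp s * k)) <->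
  (tan (x0 / 2) <= 0 \/ k * tan (x0 / 2) < 1) /\ (0 <= tan (x0 / 2) \/ k * tan (x0 / 2) < 1).
Proof.
  unfold in_Omega_int, xstar. set (a := tan (x0 / 2)).
  transitivity (atan (exp s * k) + atan (exp (- s) * a) < PI / 2 /\
                atan (- (exp s * k)) + atan (- (exp (- s) * a)) < PI / 2).
  { rewrite !atan_opp. split; intros [H1 H2]; split; lra. }
  rewrite !atan_add_lt_PI2_iff, exp_mul_le_0_iff, Ropp_mult_distr_r, exp_mul_le_0_iff.
  replace (- (exp s * k) * (exp (- s) * - a)) with (exp s * k * (exp (- s) * a)) by ring.
  rewrite exp_mul_exp_opp. split; intros [[H1|H1] [H2|H2]]; split; lra.
Qed.

Lemma in_Omega_int_2atan_exp_sub_2PI x0 s k :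
  in_Omega_int x0 s (2 * atan (exp s * k) + - (2 * PI)) <->
  0 < tan (x0 / 2) /\ 1 < k * tan (x0 / 2).
Proof.
  pose proof (atan_bound (exp s * k)). pose proof (Rabs_xstar_lt_PI x0 s) as Hx.
  apply Rabs_def2 in Hx. unfold in_Omega_int in *. unfold xstar in *.
  set (a := tan (x0 / 2)) in *.
  rewrite <- (exp_mul_pos_iff (- s) a), <- (exp_mul_exp_opp s k a).
  rewrite <- PI2_lt_atan_add_iff. split; [intros [H1 _] | intros H1; split]; lra.
Qed.

Lemma in_Omega_int_neg_PI x0 s : in_Omega_int x0 s (- PI) <-> 0 < tan (x0 / 2).
Proof.
  pose proof (Rabs_xstar_lt_PI x0 s) as Hx. apply Rabs_def2 in Hx.
  unfold in_Omega_int in *. unfold xstar in *.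
  rewrite <- exp_mul_pos_iff with (s := - s), <- atan_pos_iff.
  split; [intros [H1 _] | intros H1; split]; lra.
Qed.

Definition is_characteristic (x0 : R) (X : R -> R) : Prop :=
  (forall s, is_derive X s (sin (X s))) /\ (forall s, in_Omega_int x0 s (X s)).

Lemma characteristic_lt_PI x0 s1 y1 : in_Omega_int x0 s1 y1 -> y1 < PI ->
  exists X, X s1 = y1 /\ is_characteristic x0 X.
Proof.
  intros Hy1 HyPI. pose proof (Rabs_xstar_lt_PI x0 s1) as Hx. apply Rabs_def2 in Hx.
  pose proof Hy1 as [Hlo Hhi].
  destruct (Rtotal_order y1 (- PI)) as [Hlt|[->|Hgt]].
  - set (k := exp (- s1) * tan (y1 / 2 + PI)).
    assert (HX1 : 2 * atan (exp s1 * k) + - (2 * PI) = y1).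
    { unfold k. rewrite exp_mul_exp_opp_l, atan_tan by lra. field. }
    exists (fun s => 2 * atan (exp s * k) + - (2 * PI)). split; [exact HX1|split].
    + apply is_derive_2atan_exp. intros w.
      rewrite sin_plus, sin_neg, cos_neg, sin_2PI, cos_2PI. ring.
    + intros s. apply in_Omega_int_2atan_exp_sub_2PI.
      apply (in_Omega_int_2atan_exp_sub_2PI x0 s1). now rewrite HX1.
  - exists (fun _ => - PI). split; [reflexivity|split].
    + intros s. rewrite sin_neg, sin_PI, Ropp_0.
      apply (is_derive_const (K := R_AbsRing) (V := R_NormedModule)).
    + intros s. apply in_Omega_int_neg_PI, (in_Omega_int_neg_PI x0 s1), Hy1.
  - set (k := exp (- s1) * tan (y1 / 2)).
    assert (HX1 : 2 * atan (exp s1 * k) + 0 = y1).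
    { unfold k. rewrite exp_mul_exp_opp_l, atan_tan by lra. field. }
    exists (fun s => 2 * atan (exp s * k) + 0). split; [exact HX1|split].
    + apply is_derive_2atan_exp. intros w. now rewrite Rplus_0_r.
    + intros s. rewrite Rplus_0_r. apply in_Omega_int_2atan_exp.
      apply (in_Omega_int_2atan_exp x0 s1). now rewrite <- (Rplus_0_r (2 * _)), HX1.
Qed.

Lemma characteristic_through x0 s1 y1 : in_Omega_int x0 s1 y1 ->
  exists X, X s1 = y1 /\ is_characteristic x0 X.
Proof.
  intros Hy1. destruct (Rlt_or_le y1 PI) as [Hlt|Hge].
  - now apply characteristic_lt_PI.
  - rewrite <- in_Omega_int_opp in Hy1.
    destruct (characteristic_lt_PI (- x0) s1 (- y1) Hy1 ltac:(pose proof PI_RGT_0; lra))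
      as [X [HX1 [HXd HXin]]].
    exists (fun s => - X s). split; [lra | split].
    + intros s. rewrite sin_neg.
      apply (is_derive_opp (K := R_AbsRing) (V := R_NormedModule)), HXd.
    + intros s. rewrite <- in_Omega_int_opp, Ropp_involutive. apply HXin.
Qed.

Lemma Rabs_xstar_le x0 s : Rabs x0 < PI -> 0 <= s -> Rabs (xstar x0 s) <= Rabs x0.
Proof.
  intros Hx Hs. unfold xstar. apply Rabs_def2 in Hx.
  assert (Ha : atan (tan (x0 / 2)) = x0 / 2) by (apply atan_tan; lra).
  assert (He : 0 < exp (- s) <= 1).
  { split; [apply exp_pos|]. rewrite <- exp_0. apply exp_le_exp. lra. }
  set (a := tan (x0 / 2)) in *.
  assert (H : Rabs (atan (exp (- s) * a)) <= Rabs (atan a)).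
  { destruct (Rle_or_lt 0 a) as [H0|H0].
    - assert (0 <= atan (exp (- s) * a) <= atan a); [|split_Rabs; lra].
      split.
      + rewrite <- atan_0. apply Rnot_lt_le. rewrite atan_lt_iff. nra.
      + apply Rnot_lt_le. rewrite atan_lt_iff. nra.
    - assert (atan a <= atan (exp (- s) * a) <= 0); [|split_Rabs; lra].
      split.
      + apply Rnot_lt_le. rewrite atan_lt_iff. nra.
      + rewrite <- atan_0. apply Rnot_lt_le. rewrite atan_lt_iff. nra. }
  rewrite Ha in H. rewrite Rabs_mult, (Rabs_right 2) by lra.
  rewrite Rabs_div, (Rabs_right 2) in H by lra. lra.
Qed.

Lemma continuous_xstar x0 s : continuous (xstar x0) s.
Proof.
  apply ex_derive_continuous_R. unfold xstar. auto_derive.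
  assert (0 <= (exp (- s) * tan (x0 / 2)) ^ 2) by apply pow2_ge_0. lra.
Qed.

Lemma in_Omega_of_int x0 s y : in_Omega_int x0 s y -> in_Omega x0 s y.
Proof. unfold in_Omega_int, in_Omega. lra. Qed.

Section SmallShift.

Variable x0 : R.
Hypothesis x0_small : Rabs x0 < / 10.

Lemma Rabs_xstar_le_tenth s : 0 <= s -> Rabs (xstar x0 s) <= / 10.
Proof.
  intros Hs. pose proof PI2_3_2.
  pose proof (Rabs_xstar_le x0 s ltac:(lra) Hs). lra.
Qed.

Lemma Rabs_le_of_in_Omega s y : 0 <= s -> in_Omega x0 s y -> Rabs y <= PI + / 10.
Proof.
  intros Hs Hy. pose proof (Rabs_xstar_le_tenth s Hs) as H. unfold in_Omega in Hy.
  apply Rabs_le_between in H. apply Rabs_le_between. lra.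
Qed.

Lemma in_Omega_int_between s y z : 0 <= s -> in_Omega_int x0 s y ->
  Rmin 0 y <= z <= Rmax 0 y -> in_Omega_int x0 s z.
Proof.
  intros Hs Hy Hz. pose proof (Rabs_xstar_le_tenth s Hs) as H. pose proof PI2_3_2.
  apply Rabs_le_between in H. unfold in_Omega_int in *.
  unfold Rmin, Rmax in Hz. destruct Rle_dec in Hz; lra.
Qed.

Lemma in_Omega_PI2 s : 0 <= s -> in_Omega x0 s (PI / 2).
Proof.
  intros Hs. pose proof (Rabs_xstar_le_tenth s Hs) as H. pose proof PI2_3_2.
  apply Rabs_le_between in H. unfold in_Omega. lra.
Qed.

Lemma W_eq_0_in_Omega s y : 0 <= s -> in_Omega x0 s y -> W y = 0 -> y = 0.
Proof.
  intros Hs Hy HW. pose proof (Rabs_le_of_in_Omega s y Hs Hy) as Hb.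
  destruct (W_eq_0 y HW) as [k ->]. pose proof PI2_3_2. apply Rabs_le_between in Hb.
  assert (IZR k < 1 /\ -1 < IZR k) as [H1 H2].
  { split; apply Rnot_le_lt; intros Hk; [assert (2 * PI <= 2 * PI * IZR k) by nra
                                        | assert (2 * PI * IZR k <= - (2 * PI)) by nra]; lra. }
  apply lt_IZR in H1. apply lt_IZR in H2. replace k with 0%Z by lia. ring.
Qed.

End SmallShift.

Lemma in_Omega_int_locally x0 s y : in_Omega_int x0 s y ->
  exists d, 0 < d /\ forall u v, Rabs (u - s) < d -> Rabs (v - y) < d -> in_Omega_int x0 u v.
Proof.
  intros [H1 H2].
  set (m := Rmin (y - (- PI - xstar x0 s)) (PI - xstar x0 s - y) / 2).
  assert (Hm : 0 < m /\ m <= (y - (- PI - xstar x0 s)) / 2 /\ m <= (PI - xstar x0 s - y) / 2).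
  { unfold m. pose proof (Rmin_l (y - (- PI - xstar x0 s)) (PI - xstar x0 s - y)).
    pose proof (Rmin_r (y - (- PI - xstar x0 s)) (PI - xstar x0 s - y)).
    assert (0 < Rmin (y - (- PI - xstar x0 s)) (PI - xstar x0 s - y)) by (apply Rmin_pos; lra).
    lra. }
  destruct (continuous_eps_delta _ _ (continuous_xstar x0 s) m (proj1 Hm)) as [d [Hd Hd2]].
  exists (Rmin d m). split; [apply Rmin_pos; lra|].
  intros u v Hu Hv. pose proof (Rmin_l d m). pose proof (Rmin_r d m).
  specialize (Hd2 u ltac:(lra)). apply Rabs_lt_between in Hd2.
  apply Rabs_lt_between in Hv. unfold in_Omega_int. lra.
Qed.

(** * Boundedness on compact time intervals *)

Lemma exists_fine_subdivision a b del : 0 <= a -> 0 <= b -> 0 < del ->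
  exists n : nat, a / INR (S n) < del /\ b / INR (S n) < del.
Proof.
  intros Ha Hb Hdel. destruct (nfloor_ex ((a + b) / del)) as [n Hn].
  { apply Rdiv_le_0_compat; lra. }
  exists n. set (N := INR (S n)).
  assert (HN : (a + b) / del < N) by (unfold N; rewrite S_INR; lra).
  assert (HN0 : 0 < N) by (unfold N; rewrite S_INR; pose proof (pos_INR n); lra).
  assert (a + b < del * N).
  { apply (Rmult_lt_reg_r (/ del)); [apply Rinv_0_lt_compat; lra|].
    replace (del * N * / del) with N by (field; lra). exact HN. }
  split; apply (Rmult_lt_reg_r N); auto; unfold Rdiv; rewrite Rmult_assoc, Rinv_l; lra.
Qed.

Lemma continuity_2d_bounded (F : R -> R -> R) a b : 0 <= a -> 0 <= b ->
  (forall u v, 0 <= u <= a -> 0 <= v <= b -> continuity_2d_pt F u v) ->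
  exists B, forall u v, 0 <= u <= a -> 0 <= v <= b -> Rabs (F u v) <= B.
Proof.
  intros Ha Hb HF.
  destruct (uniform_continuity_2d F 0 a 0 b HF (mkposreal 1 Rlt_0_1)) as [del Hdel].
  pose proof (cond_pos del) as Hdel0.
  destruct (exists_fine_subdivision a b del Ha Hb Hdel0) as [n Hstep].
  set (N := INR (S n)) in Hstep.
  assert (HN0 : 0 < N) by (unfold N; rewrite S_INR; pose proof (pos_INR n); lra).
  exists (Rabs (F 0 0) + N). intros u v Hu Hv.
  assert (Hin : forall m, INR m <= N -> 0 <= INR m * u / N <= u /\ 0 <= INR m * v / N <= v).
  { intros m Hm. pose proof (pos_INR m).
    split; split; try (apply Rdiv_le_0_compat; nra);
      apply (Rmult_le_reg_r N); auto; unfold Rdiv; rewrite Rmult_assoc, Rinv_l; nra. }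
  assert (Hwalk : forall m, (m <= S n)%nat ->
    Rabs (F (INR m * u / N) (INR m * v / N) - F 0 0) <= INR m).
  { induction m as [|m IH]; intros Hm.
    - simpl. rewrite !Rmult_0_l, !Rdiv_0_l, Rminus_diag_eq, Rabs_R0; lra.
    - specialize (IH ltac:(lia)).
      assert (HmN : INR (S m) <= N) by (apply le_INR; exact Hm).
      assert (HmN' : INR m <= N) by (rewrite S_INR in HmN; lra).
      destruct (Hin m HmN') as [Hu1 Hv1]. destruct (Hin (S m) HmN) as [Hu2 Hv2].
      assert (H1 : Rabs (F (INR (S m) * u / N) (INR (S m) * v / N)
                         - F (INR m * u / N) (INR m * v / N)) < 1).
      { apply Hdel; try lra; rewrite S_INR.
        - replace ((INR m + 1) * u / N - INR m * u / N) with (u / N) by (field; lra).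
          rewrite Rabs_right by (apply Rle_ge, Rdiv_le_0_compat; lra).
          apply (Rle_lt_trans _ (a / N)); [apply Rmult_le_compat_r|]; try lra.
          left. apply Rinv_0_lt_compat. lra.
        - replace ((INR m + 1) * v / N - INR m * v / N) with (v / N) by (field; lra).
          rewrite Rabs_right by (apply Rle_ge, Rdiv_le_0_compat; lra).
          apply (Rle_lt_trans _ (b / N)); [apply Rmult_le_compat_r|]; try lra.
          left. apply Rinv_0_lt_compat. lra. }
      set (Fm := F (INR m * u / N) (INR m * v / N)) in *.
      set (FS := F (INR (S m) * u / N) (INR (S m) * v / N)) in *.
      replace (FS - F 0 0) with ((FS - Fm) + (Fm - F 0 0)) by ring.
      pose proof (Rabs_triang (FS - Fm) (Fm - F 0 0)). rewrite S_INR. lra. }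
  specialize (Hwalk (S n) (le_n _)). fold N in Hwalk.
  replace (N * u / N) with u in Hwalk by (field; lra).
  replace (N * v / N) with v in Hwalk by (field; lra).
  pose proof (Rabs_triang_inv (F u v) (F 0 0)). lra.
Qed.

Definition clamp (a b u : R) : R := Rmax a (Rmin b u).

Lemma clamp_between a b u : a <= b -> a <= clamp a b u <= b.
Proof. intros H. unfold clamp, Rmax, Rmin. repeat destruct Rle_dec; lra. Qed.

Lemma clamp_id a b u : a <= u <= b -> clamp a b u = u.
Proof. intros H. unfold clamp, Rmax, Rmin. repeat destruct Rle_dec; lra. Qed.

Lemma clamp_lipschitz a b u u' : a <= b -> Rabs (clamp a b u' - clamp a b u) <= Rabs (u' - u).
Proof. intros H. unfold clamp, Rmax, Rmin. repeat destruct Rle_dec; split_Rabs; lra. Qed.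

Definition jointly_continuous_on_Omega (x0 : R) (eps : R -> R -> R) : Prop :=
  forall t x, 0 <= t -> in_Omega x0 t x ->
  forall e : R, 0 < e -> exists d : R, 0 < d /\
    forall s y, 0 <= s -> in_Omega x0 s y -> Rabs (s - t) < d -> Rabs (y - x) < d ->
      Rabs (eps s y - eps t x) < e.

Section Boundedness.

Variables (x0 tau : R) (eps : R -> R -> R).
Hypothesis tau_ge_0 : 0 <= tau.
Hypothesis eps_continuous : jointly_continuous_on_Omega x0 eps.

(* [eps] on the space-time domain over [[0, tau]], read in the coordinates
   [(s, th)] of the rectangle [[0, tau] x [0, 1]] and extended by clamping. *)
Let F (u th : R) : R :=
  eps (clamp 0 tau u) (- PI - xstar x0 (clamp 0 tau u) + 2 * PI * clamp 0 1 th).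

Lemma continuity_2d_pt_rectangle_coordinates u th : continuity_2d_pt F u th.
Proof.
  pose proof PI_RGT_0. intros e.
  set (s := clamp 0 tau u). set (c := clamp 0 1 th).
  pose proof (clamp_between 0 tau u tau_ge_0) as Hs.
  pose proof (clamp_between 0 1 th ltac:(lra)) as Hc. fold s c in Hs, Hc.
  assert (Hin : in_Omega x0 s (- PI - xstar x0 s + 2 * PI * c)) by (unfold in_Omega; nra).
  destruct (eps_continuous _ _ (proj1 Hs) Hin e (cond_pos e)) as [d [Hd Hd2]].
  destruct (continuous_eps_delta _ _ (continuous_xstar x0 s) (d / 2) ltac:(lra))
    as [d' [Hd' Hd'2]].
  assert (Hdel : 0 < Rmin (Rmin d d') (d / (4 * PI))).
  { apply Rmin_pos; [apply Rmin_pos|apply Rdiv_lt_0_compat]; lra. }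
  exists (mkposreal _ Hdel). simpl. intros u' th' Hu Hth.
  pose proof (Rmin_l (Rmin d d') (d / (4 * PI))). pose proof (Rmin_r (Rmin d d') (d / (4 * PI))).
  pose proof (Rmin_l d d'). pose proof (Rmin_r d d').
  pose proof (clamp_lipschitz 0 tau u u' tau_ge_0) as Hs'.
  pose proof (clamp_lipschitz 0 1 th th' ltac:(lra)) as Hc'.
  pose proof (clamp_between 0 tau u' tau_ge_0).
  pose proof (clamp_between 0 1 th' ltac:(lra)).
  fold s c in Hs', Hc'. set (s' := clamp 0 tau u') in *. set (c' := clamp 0 1 th') in *.
  specialize (Hd'2 s' ltac:(lra)).
  assert (2 * PI * Rabs (c' - c) <= d / 2).
  { apply (Rle_trans _ (2 * PI * (d / (4 * PI)))); [apply Rmult_le_compat_l; lra|].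
    right. field. lra. }
  unfold F. fold s s' c c'. apply Hd2; [lra | unfold in_Omega; nra | lra |].
  replace (- PI - xstar x0 s' + 2 * PI * c' - (- PI - xstar x0 s + 2 * PI * c))
    with (- (xstar x0 s' - xstar x0 s) + 2 * PI * (c' - c)) by ring.
  eapply Rle_lt_trans; [apply Rabs_triang|].
  rewrite Rabs_Ropp, Rabs_mult, (Rabs_right (2 * PI)) by lra. lra.
Qed.

Lemma solution_bounded : exists D0, 0 <= D0 /\
  forall s y, 0 <= s <= tau -> in_Omega x0 s y -> Rabs (eps s y) <= D0.
Proof.
  pose proof PI_RGT_0.
  destruct (continuity_2d_bounded F tau 1 tau_ge_0 ltac:(lra)
              (fun u th _ _ => continuity_2d_pt_rectangle_coordinates u th)) as [B HB].
  exists (Rmax 0 B). split; [apply Rmax_l|]. intros s y Hs Hy.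
  set (th := (y + PI + xstar x0 s) / (2 * PI)).
  assert (Hth : 0 <= th <= 1).
  { unfold in_Omega in Hy. unfold th. split.
    - apply Rdiv_le_0_compat; lra.
    - apply (Rmult_le_reg_r (2 * PI)); [lra|]. unfold Rdiv.
      rewrite Rmult_assoc, Rinv_l; lra. }
  specialize (HB s th Hs Hth). unfold F in HB.
  rewrite (clamp_id 0 tau s), (clamp_id 0 1 th) in HB by assumption.
  replace (- PI - xstar x0 s + 2 * PI * th) with y in HB by (unfold th; field; lra).
  pose proof (Rmax_r 0 B). lra.
Qed.

End Boundedness.

(** * The bootstrap *)

Section Bootstrap.

Variables (th x0 M : R) (eps0 : R -> R) (eps : R -> R -> R).
Hypothesis th_bounds : 0 < th < 1.
Hypothesis x0_small : Rabs x0 < / 10.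
Hypothesis eps_solution : is_global_solution x0 eps0 eps.
Hypothesis M_ge_0 : 0 <= M.
Hypothesis eps0_le : forall y, in_Omega x0 0 y -> Rabs (eps0 y) <= M * W y.

Lemma eps_jointly_continuous : jointly_continuous_on_Omega x0 eps.
Proof. destruct eps_solution as [_ [H _]]. exact H. Qed.

Lemma continuous_eps_in_space s y : 0 <= s -> in_Omega_int x0 s y ->
  continuous (fun y => eps s y) y.
Proof.
  intros Hs Hy. apply eps_delta_continuous. intros e He.
  destruct (eps_jointly_continuous s y Hs (in_Omega_of_int _ _ _ Hy) e He) as [d [Hd Hd2]].
  destruct (in_Omega_int_locally x0 s y Hy) as [d' [Hd' Hd'2]].
  exists (Rmin d d'). split; [apply Rmin_pos; lra|]. intros y' Hy'.
  pose proof (Rmin_l d d'). pose proof (Rmin_r d d').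
  assert (Rabs (s - s) = 0) by (rewrite Rminus_diag_eq, Rabs_R0; reflexivity).
  apply Hd2; [lra | apply in_Omega_of_int, Hd'2 | |]; lra.
Qed.

Definition defect_bound (tau D : R) : Prop :=
  forall s y, 0 <= s <= tau -> in_Omega x0 s y ->
    Rabs (eps s y) <= M * exp (- (1 - th) * s) * W y + D * exp (9 * s).

Lemma Rabs_RInt_eps_le tau D s X : defect_bound tau D -> 0 <= s <= tau -> in_Omega_int x0 s X ->
  Rabs (RInt (fun y => eps s y) 0 X)
  <= M * exp (- (1 - th) * s) * V X + D * exp (9 * s) * Rabs X.
Proof.
  intros HD Hs HX. pose proof PI2_3_2.
  pose proof (Rabs_le_of_in_Omega x0 x0_small s X (proj1 Hs) (in_Omega_of_int _ _ _ HX)).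
  apply Rabs_RInt_le_W; [lra| |].
  - apply (ex_RInt_continuous (V := R_CompleteNormedModule)). intros z Hz.
    apply continuous_eps_in_space; [lra|].
    apply (in_Omega_int_between x0 x0_small s X); [lra | exact HX | exact Hz].
  - intros y Hy. apply HD; [lra|]. apply in_Omega_of_int.
    apply (in_Omega_int_between x0 x0_small s X); [lra | exact HX | lra].
Qed.

Lemma is_derive_eps_along_characteristic X s : is_characteristic x0 X -> 0 < s ->
  is_derive (fun r => eps r (X r)) s
    (2 * cos (X s) * eps s (X s) + sin (X s) * RInt (fun y => eps s y) 0 (X s)).
Proof.
  intros [HXd HXin] Hs.
  destruct (in_Omega_int_locally x0 s (X s) (HXin s)) as [d [Hd Hd2]].
  destruct (proj2 (proj2 eps_solution) s (X s) Hs (HXin s)) as [_ [Hy [Ht [_ Heq]]]].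
  replace (2 * cos (X s) * eps s (X s) + sin (X s) * RInt (fun y => eps s y) 0 (X s))
    with (Derive (fun z => eps z (X s)) s + Derive (fun y => eps s y) (X s) * sin (X s))
    by (rewrite Heq; ring).
  apply (is_derive_along_curve eps X s (sin (X s)) (Rmin d s)); [apply Rmin_pos; lra | | | |].
  - intros u v Hu Hv. pose proof (Rmin_l d s). pose proof (Rmin_r d s).
    apply (proj2 (proj2 eps_solution) u v); [apply Rabs_lt_between in Hu; lra|].
    apply Hd2; lra.
  - exact Hy.
  - apply continuity_2d_pt_filterlim. exact Ht.
  - apply HXd.
Qed.

Lemma eps_along_characteristic_right_continuous X : is_characteristic x0 X ->
  forall e, 0 < e -> exists d, 0 < d /\
    forall s, 0 <= s -> s < d -> Rabs (eps s (X s) - eps 0 (X 0)) < e.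
Proof.
  intros [HXd HXin] e He.
  destruct (eps_jointly_continuous 0 (X 0) (Rle_refl 0) (in_Omega_of_int _ _ _ (HXin 0)) e He)
    as [d1 [Hd1 Hd1']].
  assert (HXc : continuous X 0) by (apply ex_derive_continuous_R; eexists; apply HXd).
  destruct (continuous_eps_delta X 0 HXc d1 Hd1) as [d2 [Hd2 Hd2']].
  exists (Rmin d1 d2). split; [apply Rmin_pos; lra|]. intros s Hs0 Hsd.
  pose proof (Rmin_l d1 d2). pose proof (Rmin_r d1 d2).
  assert (Rabs (s - 0) < Rmin d1 d2) by (rewrite Rminus_0_r, Rabs_right; lra).
  apply Hd1'; [lra | apply in_Omega_of_int, HXin | lra | apply Hd2'; lra].
Qed.

Definition barrier (X : R -> R) (D s : R) : R :=
  M * exp (- (1 - th) * s) * W (X s) + 5 / 7 * D * exp (9 * s).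

Definition barrier_derive (X : R -> R) (D s : R) : R :=
  M * (- (1 - th) * exp (- (1 - th) * s) * W (X s)
       + exp (- (1 - th) * s) * (dW (X s) * sin (X s)))
  + 5 / 7 * D * (9 * exp (9 * s)).

Lemma is_derive_barrier X D s : is_characteristic x0 X ->
  is_derive (barrier X D) s (barrier_derive X D s).
Proof.
  intros [HXd _]. unfold barrier, barrier_derive. auto_derive.
  - split; [|split; auto]; eexists; [apply is_derive_W | apply HXd].
  - replace (Derive (fun x => W x) (X s)) with (dW (X s))
      by (symmetry; apply is_derive_unique, is_derive_W).
    replace (Derive (fun x => X x) s) with (sin (X s))
      by (symmetry; apply is_derive_unique, HXd).
    ring.
Qed.

(* The constants [9] and [5 / 7] leave room for the nonlocal term, which
   contributes at most [|sin x| |x| D <= (PI + 1 / 10) D]: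
   [9 * 5 / 7 >= 2 * 5 / 7 + PI + 1 / 10]. *)
Lemma barrier_differential_ineq tau D X sg s : defect_bound tau D -> 0 <= D ->
  is_characteristic x0 X -> Rabs sg = 1 -> 0 < s <= tau ->
  0 < sg * eps s (X s) - barrier X D s ->
  sg * (2 * cos (X s) * eps s (X s) + sin (X s) * RInt (fun y => eps s y) 0 (X s))
    - barrier_derive X D s <= 2 * (sg * eps s (X s) - barrier X D s).
Proof.
  intros HD HD0 HX Hsg Hs Hg. pose proof HX as [_ HXin].
  pose proof (Rabs_RInt_eps_le tau D s (X s) HD ltac:(lra) (HXin s)) as HI.
  pose proof (Rabs_le_of_in_Omega x0 x0_small s (X s) ltac:(lra) (in_Omega_of_int _ _ _ (HXin s)))
    as HXb.
  pose proof (W_supersolution th (X s) th_bounds HXb) as Hkey.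
  unfold barrier, barrier_derive in *.
  set (Xs := X s) in *. set (phi := eps s Xs) in *.
  set (I := RInt (fun y => eps s y) 0 Xs) in *.
  set (e := exp (- (1 - th) * s)) in *. set (E := exp (9 * s)) in *.
  assert (He : 0 < e) by apply exp_pos. assert (HE : 0 < E) by apply exp_pos.
  pose proof (COS_bound Xs). pose proof PI_4.
  assert (Hsin : Rabs (sin Xs) <= 1) by (apply Rabs_le, SIN_bound).
  assert (Hweight : M * e * ((2 * cos Xs + (1 - th)) * W Xs - dW Xs * sin Xs
                             + Rabs (sin Xs) * V Xs) <= 0).
  { rewrite <- (Rmult_0_r (M * e)). apply Rmult_le_compat_l; [nra | exact Hkey]. }
  assert (Hdefect : D * E * (10 / 7 * cos Xs - 45 / 7 + Rabs (sin Xs) * Rabs Xs) <= 0).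
  { assert (Rabs (sin Xs) * Rabs Xs <= PI + / 10).
    { rewrite <- (Rmult_1_l (PI + / 10)). apply Rmult_le_compat; auto; apply Rabs_pos. }
    rewrite <- (Rmult_0_r (D * E)). apply Rmult_le_compat_l; [nra | lra]. }
  assert (Hnonlocal : sg * (sin Xs * I) <= Rabs (sin Xs) * (M * e * V Xs + D * E * Rabs Xs)).
  { eapply Rle_trans; [apply Rle_abs|]. rewrite !Rabs_mult, Hsg, Rmult_1_l.
    apply Rmult_le_compat_l; [apply Rabs_pos | exact HI]. }
  set (g := sg * phi - (M * e * W Xs + 5 / 7 * D * E)) in *.
  assert (cos Xs * g <= g) by (rewrite <- (Rmult_1_l g) at 2; apply Rmult_le_compat_r; lra).
  unfold g in *. lra.
Qed.

Lemma signed_bound_along_characteristic tau D X sg s1 : defect_bound tau D -> 0 <= D ->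
  is_characteristic x0 X -> Rabs sg = 1 -> 0 < s1 <= tau ->
  sg * eps s1 (X s1) <= barrier X D s1.
Proof.
  intros HD HD0 HX Hsg Hs1. pose proof HX as [_ HXin].
  set (g := fun s => sg * eps s (X s) - barrier X D s).
  assert (g s1 <= 0); [|unfold g in *; lra].
  apply (nonpos_of_differential_ineq g
           (fun s => sg * (2 * cos (X s) * eps s (X s)
                           + sin (X s) * RInt (fun y => eps s y) 0 (X s))
                     - barrier_derive X D s) s1 2); [lra | lra | | | | ].
  - intros e He.
    destruct (eps_along_characteristic_right_continuous X HX (e / 2) ltac:(lra))
      as [d1 [Hd1 Hd1']].
    assert (HB : continuous (barrier X D) 0)
      by (apply ex_derive_continuous_R; eexists; apply is_derive_barrier, HX).
    destruct (continuous_eps_delta _ _ HB (e / 2) ltac:(lra)) as [d2 [Hd2 Hd2']].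
    exists (Rmin d1 d2). split; [apply Rmin_pos; lra|]. intros s Hs0 Hsd _.
    pose proof (Rmin_l d1 d2). pose proof (Rmin_r d1 d2).
    specialize (Hd1' s Hs0 ltac:(lra)).
    specialize (Hd2' s ltac:(rewrite Rminus_0_r, Rabs_right; lra)).
    unfold g. replace (sg * eps s (X s) - barrier X D s - (sg * eps 0 (X 0) - barrier X D 0))
      with (sg * (eps s (X s) - eps 0 (X 0)) - (barrier X D s - barrier X D 0)) by ring.
    eapply Rle_lt_trans; [apply Rabs_triang|]. rewrite Rabs_Ropp, Rabs_mult, Hsg. lra.
  - intros s Hs. apply (is_derive_minus (K := R_AbsRing) (V := R_NormedModule)).
    + apply is_derive_scal.
      apply is_derive_eps_along_characteristic; [exact HX | lra].
    + apply is_derive_barrier, HX.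
  - intros s Hs Hg. apply (barrier_differential_ineq tau); auto. lra.
  - unfold g, barrier. destruct eps_solution as [Hinit _].
    rewrite Hinit by apply in_Omega_of_int, HXin.
    pose proof (eps0_le (X 0) (in_Omega_of_int _ _ _ (HXin 0))).
    rewrite Rmult_0_r, exp_0, Rmult_0_r, exp_0, !Rmult_1_r.
    assert (sg * eps0 (X 0) <= Rabs (eps0 (X 0)))
      by (eapply Rle_trans; [apply Rle_abs | rewrite Rabs_mult, Hsg; lra]).
    lra.
Qed.

Lemma bound_along_characteristic tau D X s1 : defect_bound tau D -> 0 <= D ->
  is_characteristic x0 X -> 0 < s1 <= tau ->
  Rabs (eps s1 (X s1)) <= barrier X D s1.
Proof.
  intros HD HD0 HX Hs1. apply Rabs_le.
  pose proof (signed_bound_along_characteristic tau D X 1 s1 HD HD0 HX Rabs_R1 Hs1).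
  pose proof (signed_bound_along_characteristic tau D X (-1) s1 HD HD0 HX
                ltac:(rewrite Rabs_left by lra; ring) Hs1).
  lra.
Qed.

Lemma defect_bound_improve tau D : defect_bound tau D -> 0 <= D -> defect_bound tau (5 / 7 * D).
Proof.
  intros HD HD0 s y Hs Hy. pose proof (exp_pos (9 * s)).
  destruct (Rle_lt_or_eq_dec 0 s (proj1 Hs)) as [Hs0| <-].
  - pose proof (Rabs_xstar_lt_PI x0 s). pose proof PI_RGT_0.
    apply (le_of_le_in_interior (fun y => Rabs (eps s y))
             (fun y => M * exp (- (1 - th) * s) * W y + 5 / 7 * D * exp (9 * s))
             (- PI - xstar x0 s) (PI - xstar x0 s)); [split_Rabs; lra | exact Hy | | |].
    + intros e He.
      destruct (eps_jointly_continuous s y (proj1 Hs) Hy e He) as [d [Hd Hd2]].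
      exists d. split; [exact Hd|]. intros y' Hy' Hyd.
      eapply Rle_lt_trans; [apply Rabs_triang_inv2|].
      apply Hd2; [lra | exact Hy' | | exact Hyd].
      rewrite Rminus_diag_eq, Rabs_R0 by reflexivity. lra.
    + apply ex_derive_continuous_R. auto_derive. exists (dW y). apply is_derive_W.
    + intros y' Hy'.
      destruct (characteristic_through x0 s y' Hy') as [X [HX1 HX]].
      rewrite <- HX1. apply (bound_along_characteristic tau); auto. lra.
  - rewrite Rmult_0_r, exp_0, Rmult_0_r, exp_0, !Rmult_1_r.
    destruct eps_solution as [Hinit _]. rewrite Hinit by exact Hy.
    pose proof (eps0_le y Hy). lra.
Qed.

Lemma defect_bound_geometric tau D : defect_bound tau D -> 0 <= D ->
  forall n, defect_bound tau ((5 / 7) ^ n * D).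
Proof.
  intros HD HD0 n. induction n as [|n IH].
  - simpl. now rewrite Rmult_1_l.
  - replace ((5 / 7) ^ S n * D) with (5 / 7 * ((5 / 7) ^ n * D)) by (simpl; ring).
    apply defect_bound_improve; [exact IH|]. apply Rmult_le_pos; [apply pow_le; lra | exact HD0].
Qed.

Lemma eps_le_weighted s y : 0 <= s -> in_Omega x0 s y ->
  Rabs (eps s y) <= M * exp (- (1 - th) * s) * W y.
Proof.
  intros Hs Hy.
  destruct (solution_bounded x0 s eps Hs eps_jointly_continuous) as [D0 [HD0 HD0b]].
  assert (HE : 1 <= exp (9 * s)) by (rewrite <- exp_0; apply exp_le_exp; lra).
  assert (HD : defect_bound s D0).
  { intros s' y' Hs' Hy'. specialize (HD0b s' y' Hs' Hy').
    assert (0 <= M * exp (- (1 - th) * s') * W y').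
    { apply Rmult_le_pos; [apply Rmult_le_pos; [lra | left; apply exp_pos] | apply W_ge_0]. }
    assert (1 <= exp (9 * s')) by (rewrite <- exp_0; apply exp_le_exp; lra).
    nra. }
  apply (le_of_le_add_pow (5 / 7) _ _ (D0 * exp (9 * s))); [lra | nra |].
  intros n. rewrite <- Rmult_assoc.
  apply (defect_bound_geometric s D0 HD HD0 n); [lra | exact Hy].
Qed.

End Bootstrap.

(** * The weighted norm *)

Lemma bigO_cube0_0 f : bigO_cube0 f -> f 0 = 0.
Proof.
  intros [C [eta [Heta H]]]. specialize (H 0 ltac:(rewrite Rabs_R0; lra)).
  rewrite Rabs_R0 in H. simpl in H. rewrite !Rmult_0_l, Rmult_0_r in H.
  apply Rabs_eq_0. apply Rle_antisym; [exact H | apply Rabs_pos].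
Qed.

Lemma le_Linf_ratio x0 t f w x : in_Omega x0 t x -> w x <> 0 ->
  Rbar_le (Rabs (f x / w x)) (Linf_ratio x0 t f w).
Proof. intros Hx Hw. apply Lub_Rbar_correct. exists x. auto. Qed.

Lemma Linf_ratio_le x0 t f w (K : R) : (forall x, 0 <= w x) ->
  (forall x, in_Omega x0 t x -> Rabs (f x) <= K * w x) ->
  Rbar_le (Linf_ratio x0 t f w) K.
Proof.
  intros Hw H. apply Lub_Rbar_correct. intros r [x [Hx [Hwx ->]]]. simpl.
  assert (Hwp : 0 < w x) by (specialize (Hw x); lra).
  rewrite Rabs_div, (Rabs_right (w x)) by lra.
  apply (Rmult_le_reg_r (w x)); [lra|].
  unfold Rdiv. rewrite Rmult_assoc, Rinv_l, Rmult_1_r by lra. now apply H.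
Qed.

Lemma Rabs_le_Linf_ratio_mul_W x0 t f M : Rabs x0 < / 10 -> 0 <= t -> bigO_cube0 f ->
  Linf_ratio x0 t f W = Finite M -> forall y, in_Omega x0 t y -> Rabs (f y) <= M * W y.
Proof.
  intros Hx0 Ht Hf HM y Hy. destruct (Req_dec (W y) 0) as [HW|HW].
  - rewrite HW, (W_eq_0_in_Omega x0 Hx0 t y Ht Hy HW), bigO_cube0_0, Rabs_R0 by exact Hf.
    lra.
  - pose proof (le_Linf_ratio x0 t f W y Hy HW) as H. rewrite HM in H. simpl in H.
    assert (HWp : 0 < W y) by (pose proof (W_ge_0 y); lra).
    rewrite Rabs_div, (Rabs_right (W y)) in H by lra.
    apply (Rmult_le_reg_r (/ W y)); [apply Rinv_0_lt_compat; lra|].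
    rewrite Rmult_assoc, Rinv_r, Rmult_1_r by lra. exact H.
Qed.

Theorem proposition3p1 :
  forall theta : R, 0 < theta < 1 ->
  exists (delta : R) (W : R -> R),
    0 < delta /\
    (forall x, 0 <= W x) /\
    (forall x, W (x + 2 * PI) = W x) /\
    W1inf W /\
    bigO_cube0 W /\
    (forall x, ~ in_2piZ x -> 0 < W x) /\
    forall (x0 : R) (eps0 : R -> R) (eps : R -> R -> R),
      - delta < x0 < delta ->
      C3_on (- PI - xstar x0 0) (PI - xstar x0 0) eps0 ->
      bigO_cube0 eps0 ->
      is_global_solution x0 eps0 eps ->
      forall t : R, 0 <= t ->
        Rbar_le (Linf_ratio x0 t (eps t) W)
                (Rbar_mult (Finite (exp (- (1 - theta) * t)))
                           (Linf_ratio x0 0 eps0 W)).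
Proof.
  intros th Hth. exists (/ 10), W.
  refine (conj _ (conj W_ge_0 (conj W_periodic (conj W_W1inf
            (conj W_bigO_cube0 (conj W_pos _)))))); [lra|].
  intros x0 eps0 eps Hx0 _ Heps0 Hsol t Ht.
  assert (Hx0' : Rabs x0 < / 10) by (apply Rabs_def1; lra).
  pose proof (le_Linf_ratio x0 0 eps0 W _ (in_Omega_PI2 x0 Hx0' 0 (Rle_refl 0)) W_PI2_neq_0)
    as HPI2.
  destruct (Linf_ratio x0 0 eps0 W) as [M| |] eqn:HM; simpl in HPI2.
  - assert (HM0 : 0 <= M) by (pose proof (Rabs_pos (eps0 (PI / 2) / W (PI / 2))); lra).
    pose proof (Rabs_le_Linf_ratio_mul_W x0 0 eps0 M Hx0' (Rle_refl 0) Heps0 HM) as Hinit.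
    apply Linf_ratio_le; [exact W_ge_0|]. intros x Hx.
    replace (exp (- (1 - th) * t) * M * W x) with (M * exp (- (1 - th) * t) * W x) by ring.
    exact (eps_le_weighted th x0 M eps0 eps Hth Hx0' Hsol HM0 Hinit t x Ht Hx).
  - rewrite Rbar_mult_comm, is_Rbar_mult_unique with (z := p_infty);
      [destruct (Linf_ratio x0 t (eps t) W); exact I|].
    apply is_Rbar_mult_p_infty_pos. apply exp_pos.
  - contradiction.
Qed.
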